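(* Let $\Omega\subset\mathbb{R}^2$ be a convex polygon and $\Gamma$ a $C^2$ curve in $\Omega$ (the interface). Assume $\mathcal U_h$ is a quasi-uniform triangulation of $\Omega$ satisfying $Minac(\alpha)$, and $\mathcal F_h$ is the interface-fitted mesh generated from $\mathcal U_h$. Then there exist $N_\alpha\in\mathbb{R}$ and $\psi_\alpha\in(0,\pi)$ depending only on $\alpha$ such that every triangle $T\in\mathcal F_h$ satisfies $Maxac(\psi_\alpha)$ and every quadrilateral $K\in\mathcal F_h$ satisfies $RDP(N_\alpha,\psi_\alpha)$.
   Context: A triangle or quadrilateral satisfies $Minac(\alpha)$ if all its angles are $\ge\alpha$, and $Maxac(\psi)$ if all its angles are $\le\psi$; a mesh satisfies $Minac(\alpha)$ if all its elements do. A convex quadrilateral $K$ satisfies $RDP(N,\psi)$ if it can be divided along one of its diagonals $d_1$ into two triangles such that $|d_2|/|d_1|\le N$ ($d_2$ the other diagonal) and both triangles satisfy $Maxac(\psi)$. Interface-fitted mesh: for each triangle of $\mathcal U_h$ whose intersection with $\Gamma$ has positive length, $\Gamma$ crosses two of its edges; connecting successively the intersection points of $\Gamma$ with the edges of $\mathcal U_h$ by straight segments cuts each such triangle into a triangle and a quadrilateral; $\mathcal F_h$ consists of these pieces together with the triangles of $\mathcal U_h$ not crossed by $\Gamma$. *)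

From HB Require Import structures.
From mathcomp Require Import all_boot all_order all_algebra.
From mathcomp Require Import all_classical all_reals all_analysis.
Set Implicit Arguments. Unset Strict Implicit. Unset Printing Implicit Defensive.
Import Order.TTheory GRing.Theory Num.Theory.
Import numFieldNormedType.Exports.
Local Open Scope classical_set_scope.
Local Open Scope ring_scope.

Section Geometry.
Variable R : realType.

Definition pt := (R * R)%type.
Definition psub (p q : pt) : pt := (p.1 - q.1, p.2 - q.2).
Definition dot (u v : pt) : R := u.1 * v.1 + u.2 * v.2.
Definition cross (u v : pt) : R := u.1 * v.2 - u.2 * v.1.
Definition enorm (u : pt) : R := Num.sqrt (dot u u).
Definition dist (p q : pt) : R := enorm (psub p q).

Definition angle (p q r : pt) : R :=
  acos (dot (psub p q) (psub r q) / (dist p q * dist r q)).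

Definition seg (p q : pt) : set pt :=
  [set x | exists t : R, 0 <= t <= 1 /\ x = (p.1 + t * (q.1 - p.1), p.2 + t * (q.2 - p.2))].
Definition oseg (p q : pt) : set pt :=
  [set x | exists t : R, 0 < t < 1 /\ x = (p.1 + t * (q.1 - p.1), p.2 + t * (q.2 - p.2))].

Definition conv_hull (vs : seq pt) : set pt :=
  [set x | exists l : nat -> R, (forall i, 0 <= l i) /\
     \sum_(i < size vs) l i = 1 /\
     x = (\sum_(i < size vs) l i * (nth (0, 0) vs i).1,
          \sum_(i < size vs) l i * (nth (0, 0) vs i).2)].

Definition convex_polygon (Omega : set pt) : Prop :=
  exists vs : seq pt, Omega = conv_hull vs /\ interior Omega !=set0.

Definition tri := (pt * pt * pt)%type.
Definition tv1 (T : tri) : pt := T.1.1.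
Definition tv2 (T : tri) : pt := T.1.2.
Definition tv3 (T : tri) : pt := T.2.
Definition tverts (T : tri) : seq pt := [:: tv1 T; tv2 T; tv3 T].
Definition tset (T : tri) : set pt := conv_hull (tverts T).
Definition tbdry (T : tri) : set pt :=
  seg (tv1 T) (tv2 T) `|` seg (tv2 T) (tv3 T) `|` seg (tv3 T) (tv1 T).
Definition nondeg (T : tri) : Prop :=
  cross (psub (tv2 T) (tv1 T)) (psub (tv3 T) (tv1 T)) != 0.

Definition Minac_tri (alpha : R) (a b c : pt) : Prop :=
  [/\ alpha <= angle b a c, alpha <= angle a b c & alpha <= angle a c b].
Definition Maxac_tri (psi : R) (a b c : pt) : Prop :=
  [/\ angle b a c <= psi, angle a b c <= psi & angle a c b <= psi].

Definition Minac_mesh (alpha : R) (Uh : seq tri) : Prop :=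
  forall T, T \in Uh -> Minac_tri alpha (tv1 T) (tv2 T) (tv3 T).

Definition triangulation (Omega : set pt) (Uh : seq tri) : Prop :=
  [/\ forall T, T \in Uh -> nondeg T,
      \bigcup_(T in [set T | T \in Uh]) tset T = Omega &
      forall T1 T2, T1 \in Uh -> T2 \in Uh -> T1 != T2 ->
        let S := tset T1 `&` tset T2 in
        [\/ S = set0,
            (exists v, [/\ v \in tverts T1, v \in tverts T2 & S = [set v]]) |
            (exists v w, [/\ v != w, (v \in tverts T1) && (v \in tverts T2),
                            (w \in tverts T1) && (w \in tverts T2) & S = seg v w])]].

Definition tdiam (T : tri) : R :=
  Num.max (dist (tv1 T) (tv2 T)) (Num.max (dist (tv2 T) (tv3 T)) (dist (tv3 T) (tv1 T))).
Definition tminedge (T : tri) : R :=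
  Num.min (dist (tv1 T) (tv2 T)) (Num.min (dist (tv2 T) (tv3 T)) (dist (tv3 T) (tv1 T))).
Definition meshsize (Uh : seq tri) : R := \big[Num.max/0]_(T <- Uh) tdiam T.
Definition quasi_uniform (Uh : seq tri) : Prop :=
  exists c : R, 0 < c /\ forall T, T \in Uh -> c * meshsize Uh <= tminedge T.

Definition C2 (f : R -> R) : Prop :=
  [/\ forall t, derivable f t 1, forall t, derivable (derive1 f) t 1 & continuous (derive1 (derive1 f))].
Definition regular_curve (gx gy : R -> R) : Prop :=
  forall t, 0 <= t <= 1 -> (derive1 gx t, derive1 gy t) != (0, 0).
Definition Gamma (gx gy : R -> R) : set pt :=
  [set (gx t, gy t) | t in [set t : R | 0 <= t <= 1]].

Definition speed (gx gy : R -> R) (t : R) : R :=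
  Num.sqrt (derive1 gx t ^+ 2 + derive1 gy t ^+ 2).
Definition curve_length_in (gx gy : R -> R) (S : set pt) : \bar R :=
  \int[@lebesgue_measure R]_(t in [set t : R | 0 <= t <= 1 /\ S (gx t, gy t)])
     (speed gx gy t)%:E.
Definition crossed (gx gy : R -> R) (T : tri) : Prop :=
  (0 < curve_length_in gx gy (tset T))%E.

Definition cut_by (gx gy : R -> R) (T : tri) (A B C P Q : pt) : Prop :=
  [/\ perm_eq [:: A; B; C] (tverts T), oseg A B P, oseg A C Q &
      Gamma gx gy `&` tbdry T = [set x | x = P \/ x = Q]].

Inductive elem := Tri of pt & pt & pt | Quad of pt & pt & pt & pt.

Definition interface_fitted (gx gy : R -> R) (Uh : seq tri) (Fh : set elem) : Prop :=
  (forall T, T \in Uh -> crossed gx gy T ->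
     exists A B C P Q, cut_by gx gy T A B C P Q) /\
  Fh = [set e | (exists T, [/\ T \in Uh, ~ crossed gx gy T &
                               e = Tri (tv1 T) (tv2 T) (tv3 T)]) \/
                (exists T A B C P Q, [/\ T \in Uh, crossed gx gy T,
                               cut_by gx gy T A B C P Q &
                               (e = Tri A P Q \/ e = Quad P B C Q)])].

Definition convex_quad (v0 v1 v2 v3 : pt) : Prop :=
  let c0 := cross (psub v1 v0) (psub v2 v1) in
  let c1 := cross (psub v2 v1) (psub v3 v2) in
  let c2 := cross (psub v3 v2) (psub v0 v3) in
  let c3 := cross (psub v0 v3) (psub v1 v0) in
  [/\ 0 < c0, 0 < c1, 0 < c2 & 0 < c3] \/ [/\ c0 < 0, c1 < 0, c2 < 0 & c3 < 0].

Definition RDP (N psi : R) (v0 v1 v2 v3 : pt) : Prop :=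
  convex_quad v0 v1 v2 v3 /\
  ((dist v1 v3 / dist v0 v2 <= N /\ Maxac_tri psi v0 v1 v2 /\ Maxac_tri psi v0 v2 v3) \/
   (dist v0 v2 / dist v1 v3 <= N /\ Maxac_tri psi v1 v2 v3 /\ Maxac_tri psi v1 v3 v0)).

Definition elem_ok (N psi : R) (e : elem) : Prop :=
  match e with
  | Tri a b c => Maxac_tri psi a b c
  | Quad a b c d => RDP N psi a b c d
  end.

End Geometry.

From HB Require Import structures.
From mathcomp Require Import all_boot all_order all_algebra.
From mathcomp Require Import all_classical all_reals all_analysis.
From mathcomp Require Import ring lra.
Import Order.TTheory GRing.Theory Num.Theory.
Import numFieldNormedType.Exports.

(* With [k := max (cos alpha) 0 < 1], every triangle of [U_h] has all its cosines in
   [[-k, k]] (two angles of a triangle sum to at most [pi]), so the untouched triangles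
   satisfy [Maxac (acos (-m))] for [m := (3 + k) / 4]. When [Gamma] cuts [T = abc] at
   [p] in ]a,b[ and [q] in ]a,c[, the triangle [apq] keeps the angle at [a], and the
   identity [x^2 + y^2 + z^2 + 2xyz = 1] between the cosines of a triangle forces one
   of its angles at [p] and [q], say at [p], to have cosine at most [m]. Cutting [pbcq]
   along [bq] then yields [bcq], which keeps the angle of [T] at [c], and [bqp], whose
   angle at [p] is supplementary to that of [apq]; in a triangle, one cosine in
   [[-m, m]] bounds all of them below by [-m]. Both diagonals compare to the area of
   [abc], which bounds their ratio by [3 / (1 - k^2)]. *)

Set Implicit Arguments.
Unset Strict Implicit.
Unset Printing Implicit Defensive.

Local Open Scope classical_set_scope.
Local Open Scope ring_scope.

Section CosineAlgebra.
Variable R : realFieldType.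
Implicit Types a b c k x y z : R.

Lemma triangle_cosines a b c : 0 < a -> 0 < b -> 0 < c ->
  a <= b + c -> b <= a + c -> c <= a + b ->
  let x := (c ^+ 2 + b ^+ 2 - a ^+ 2) / (2 * (c * b)) in
  let y := (c ^+ 2 + a ^+ 2 - b ^+ 2) / (2 * (c * a)) in
  let z := (b ^+ 2 + a ^+ 2 - c ^+ 2) / (2 * (b * a)) in
  [/\ 0 <= x + y, 0 <= x + z, 0 <= y + z &
      x ^+ 2 + y ^+ 2 + z ^+ 2 + 2 * x * y * z = 1].
Proof.
move=> a0 b0 c0 hbc hac hab x y z.
have abc0 : 0 < 2 * a * b * c by rewrite !mulr_gt0.
have prod_ge0 u v w : 0 <= u -> 0 <= v -> 0 <= w -> 0 <= u * (v * w) / (2 * a * b * c).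
  by move=> u0 v0 w0; rewrite divr_ge0 ?mulr_ge0 // ltW.
split.
- have -> : x + y = (a + b) * ((c - a + b) * (c + a - b)) / (2 * a * b * c).
    by rewrite /x /y; field; rewrite ?gt_eqF.
  by apply: prod_ge0; lra.
- have -> : x + z = (a + c) * ((b - a + c) * (b + a - c)) / (2 * a * b * c).
    by rewrite /x /z; field; rewrite ?gt_eqF.
  by apply: prod_ge0; lra.
- have -> : y + z = (b + c) * ((a - b + c) * (a + b - c)) / (2 * a * b * c).
    by rewrite /y /z; field; rewrite ?gt_eqF.
  by apply: prod_ge0; lra.
- by rewrite /x /y /z; field; rewrite ?gt_eqF.
Qed.

Lemma cos_identity_split k x y z : 0 <= k < 1 ->
  x ^+ 2 + y ^+ 2 + z ^+ 2 + 2 * x * y * z = 1 ->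
  -1 <= x <= 1 -> -1 <= y <= 1 -> - k <= z ->
  x <= (3 + k) / 4 \/ y <= (3 + k) / 4.
Proof.
move=> /andP[k0 k1] hid /andP[x0 x1] /andP[y0 y1] zk.
set m := (3 + k) / 4.
have m_gt0 : 0 < m by rewrite /m; lra.
have m_lt1 : m < 1 by rewrite /m; lra.
have m2 : (1 + k) / 2 <= m ^+ 2.
  have -> : m ^+ 2 = (1 + k) / 2 + ((1 - k) / 4) ^+ 2 by rewrite /m; field.
  by rewrite lerDl sqr_ge0.
case: (lerP x m) => hx; first by left.
case: (lerP y m) => hy; first by right.
exfalso.
(* [(z + x y)^2 = (1 - x^2)(1 - y^2) <= (1 - m^2)^2], whereas [x y > m^2 >= (1 + k)/2]
   gives [z + x y > (1 - k)/2 >= 1 - m^2]. *)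
have e : (z + x * y) ^+ 2 = (1 - x ^+ 2) * (1 - y ^+ 2).
  transitivity ((z + x * y) ^+ 2 + (1 - (x ^+ 2 + y ^+ 2 + z ^+ 2 + 2 * x * y * z))).
    by rewrite hid subrr addr0.
  ring.
have ax : 0 <= 1 - x ^+ 2 <= 1 - m ^+ 2 by apply/andP; split; nra.
have ay : 0 <= 1 - y ^+ 2 <= 1 - m ^+ 2 by apply/andP; split; nra.
have sqr_le : (z + x * y) ^+ 2 <= (1 - m ^+ 2) ^+ 2.
  rewrite e expr2; case/andP: ax => ? ?; case/andP: ay => ? ?.
  exact: ler_pM.
have : 0 < z + x * y by nra.
have : z + x * y <= 1 - m ^+ 2 by nra.
nra.
Qed.

(* The constant [3] is a convenient bound for [sqrt 5]: [c^2 (c^2 + a^2) <= 5 A / eta]. *)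
Lemma area_ratio_bound (a b c u v A eta : R) :
  0 < a -> 0 < b -> 0 < c -> 0 < eta <= 1 -> 0 <= u -> 0 <= v ->
  A <= c ^+ 2 * v ^+ 2 -> c ^+ 2 * a ^+ 2 * eta <= A -> c ^+ 2 * b ^+ 2 * eta <= A ->
  u ^+ 2 <= c ^+ 2 + a ^+ 2 -> c <= a + b -> u <= 3 / eta * v.
Proof.
move=> a0 b0 c0 /andP[eta0 eta1] u0 v0 A_le A_ge_a A_ge_b u_le c_le.
have c2_gt0 : 0 < c ^+ 2 by rewrite exprn_gt0.
have c2_le : c ^+ 2 <= 2 * a ^+ 2 + 2 * b ^+ 2.
  have : c ^+ 2 <= (a + b) ^+ 2 by rewrite ler_pXn2r // ?nnegrE; lra.
  have := sqr_ge0 (a - b); nra.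
have : c ^+ 2 * (u ^+ 2 * eta) <= c ^+ 2 * (5 * v ^+ 2) by nra.
rewrite ler_pM2l // => u2_le.
have : u * eta <= 3 * v.
  rewrite -(@ler_pXn2r _ 2) // ?nnegrE ?mulr_ge0 // ?(ltW eta0) // !exprMn.
  have : u ^+ 2 * eta ^+ 2 <= u ^+ 2 * eta.
    by rewrite ler_wpM2l ?sqr_ge0 // expr2 ler_piMl // ltW.
  have := sqr_ge0 v; lra.
by rewrite mulrAC ler_pdivlMr.
Qed.

End CosineAlgebra.

Section PlaneGeometry.
Variable R : realType.
Implicit Types p q r a b c : pt R.

Definition cos_angle p q r : R :=
  dot (psub p q) (psub r q) / (dist p q * dist r q).

Definition lerp p q (t : R) : pt R := (p.1 + t * (q.1 - p.1), p.2 + t * (q.2 - p.2)).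

Definition pscale (k : R) (u : pt R) : pt R := (k * u.1, k * u.2).

Lemma sqr_dist p q : dist p q ^+ 2 = (p.1 - q.1) ^+ 2 + (p.2 - q.2) ^+ 2.
Proof.
rewrite /dist /enorm sqr_sqrtr /dot /psub /=; first by ring.
by rewrite -!expr2 addr_ge0 ?sqr_ge0.
Qed.

Lemma dist_ge0 p q : 0 <= dist p q.
Proof. exact: sqrtr_ge0. Qed.

Lemma distC p q : dist p q = dist q p.
Proof. by rewrite /dist /enorm /dot /psub /=; congr Num.sqrt; ring. Qed.

Lemma distxx p : dist p p = 0.
Proof. by rewrite /dist /enorm /dot /psub /= !subrr mul0r addr0 sqrtr0. Qed.

Lemma dist_eq0 p q : dist p q = 0 -> p = q.
Proof.
move=> pq; have : (p.1 - q.1) ^+ 2 + (p.2 - q.2) ^+ 2 = 0 by rewrite -sqr_dist pq expr0n.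
move/eqP; rewrite paddr_eq0 ?sqr_ge0 // !sqrf_eq0 !subr_eq0 => /andP[/eqP e1 /eqP e2].
by case: p q e1 e2 {pq} => [? ?] [? ?] /= -> ->.
Qed.

Lemma sqr_dot_le p q r : dot (psub p q) (psub r q) ^+ 2 <= (dist p q * dist r q) ^+ 2.
Proof.
rewrite exprMn !sqr_dist /dot /psub /=.
have := sqr_ge0 ((p.1 - q.1) * (r.2 - q.2) - (p.2 - q.2) * (r.1 - q.1)); nra.
Qed.

Lemma norm_dot_le p q r : `|dot (psub p q) (psub r q)| <= dist p q * dist r q.
Proof.
by rewrite -(@ler_pXn2r _ 2) ?nnegrE ?mulr_ge0 ?dist_ge0 // real_normK ?num_real ?sqr_dot_le.
Qed.

Lemma dist_triangle p q r : dist p r <= dist p q + dist q r.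
Proof.
have := norm_dot_le p q r; rewrite ler_norml => /andP[hdot _].
rewrite [dist q r]distC.
have law : dist p r ^+ 2 = dist p q ^+ 2 + dist r q ^+ 2 - 2 * dot (psub p q) (psub r q).
  by rewrite !sqr_dist /dot /psub /=; ring.
have pq0 := dist_ge0 p q; have rq0 := dist_ge0 r q; have pr0 := dist_ge0 p r.
have : dist p r ^+ 2 <= (dist p q + dist r q) ^+ 2 by nra.
by rewrite ler_pXn2r ?nnegrE ?addr_ge0.
Qed.

Lemma cos_angleC p q r : cos_angle p q r = cos_angle r q p.
Proof. by rewrite /cos_angle [dist r q * _]mulrC /dot; congr (_ / _); ring. Qed.

Lemma cos_angle_bound p q r : -1 <= cos_angle p q r <= 1.
Proof.
rewrite -ler_norml /cos_angle normrM normfV.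
have dd0 : 0 <= dist p q * dist r q by rewrite mulr_ge0 ?dist_ge0.
have hdot := norm_dot_le p q r.
rewrite (ger0_norm dd0); have [->|dd_neq0] := eqVneq (dist p q * dist r q) 0.
  by rewrite invr0 mulr0.
by rewrite ler_pdivrMr ?mul1r // lt_neqAle eq_sym dd_neq0.
Qed.

Lemma cos_angle_sides p q r : 0 < dist p q -> 0 < dist r q ->
  cos_angle p q r
  = (dist p q ^+ 2 + dist r q ^+ 2 - dist p r ^+ 2) / (2 * (dist p q * dist r q)).
Proof.
move=> pq rq; rewrite /cos_angle; have -> : dot (psub p q) (psub r q)
    = (dist p q ^+ 2 + dist r q ^+ 2 - dist p r ^+ 2) / 2.
  by rewrite !sqr_dist /dot /psub /=; field.
by field; rewrite ?gt_eqF.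
Qed.

Lemma sqr_cross_cos_angle p q r : 0 < dist p q -> 0 < dist r q ->
  cross (psub p q) (psub r q) ^+ 2
  = (dist p q * dist r q) ^+ 2 * (1 - cos_angle p q r ^+ 2).
Proof.
move=> pq rq.
have lagrange : cross (psub p q) (psub r q) ^+ 2 + dot (psub p q) (psub r q) ^+ 2
    = (dist p q * dist r q) ^+ 2.
  by rewrite exprMn !sqr_dist /cross /dot /psub /=; ring.
have hdot : dot (psub p q) (psub r q) = cos_angle p q r * (dist p q * dist r q).
  by rewrite /cos_angle divfK // mulf_neq0 // gt_eqF.
have -> : cross (psub p q) (psub r q) ^+ 2
    = (dist p q * dist r q) ^+ 2 - (cos_angle p q r * (dist p q * dist r q)) ^+ 2.
  by rewrite -lagrange hdot; ring.
ring.
Qed.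

Lemma cos_angle_scalel p p' q r k : psub p' q = pscale k (psub p q) ->
  cos_angle p' q r = Num.sg k * cos_angle p q r.
Proof.
move=> hp; rewrite /cos_angle /dist hp.
have -> : enorm (pscale k (psub p q)) = `|k| * enorm (psub p q).
  rewrite /enorm /dot /pscale /= -sqrtr_sqr -sqrtrM ?sqr_ge0 //; congr Num.sqrt; ring.
have -> : dot (pscale k (psub p q)) (psub r q) = k * dot (psub p q) (psub r q).
  by rewrite /dot /pscale /=; ring.
have sgk : Num.sg k = k / `|k|.
  have [->|k0] := eqVneq k 0; first by rewrite sgr0 mul0r.
  by rewrite {2}[k]numEsg mulfK ?normr_eq0.
rewrite sgk !invfM; ring.
Qed.

Lemma cos_angle_lerpl a b r s : 0 < s -> cos_angle (lerp a b s) a r = cos_angle b a r.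
Proof.
move=> s0; rewrite (@cos_angle_scalel b _ _ r s) ?gtr0_sg ?mul1r //.
by rewrite /psub /pscale /lerp /=; congr (_, _); ring.
Qed.

Lemma cos_angle_lerpr a b r s : s < 1 -> cos_angle (lerp a b s) b r = cos_angle a b r.
Proof.
move=> s1; rewrite (@cos_angle_scalel a _ _ r (1 - s)) ?gtr0_sg ?mul1r ?subr_gt0 //.
by rewrite /psub /pscale /lerp /=; congr (_, _); ring.
Qed.

Lemma cos_angle_lerp_supp a b r s : 0 < s < 1 ->
  cos_angle b (lerp a b s) r = - cos_angle a (lerp a b s) r.
Proof.
case/andP=> s0 s1.
have neg : - ((1 - s) / s) < 0 by rewrite oppr_lt0 divr_gt0 // subr_gt0.
rewrite (@cos_angle_scalel a _ _ r (- ((1 - s) / s))) ?ltr0_sg ?mulN1r //.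
by rewrite /psub /pscale /lerp /=; congr (_, _); field; rewrite gt_eqF.
Qed.

End PlaneGeometry.

Section Triangles.
Variable R : realType.
Implicit Types a b c : pt R.

Lemma nondeg_swap12 a b c : nondeg (a, b, c) -> nondeg (b, a, c).
Proof.
rewrite /nondeg /tv1 /tv2 /tv3 /=.
have -> : cross (psub a b) (psub c b) = - cross (psub b a) (psub c a).
  by rewrite /cross /psub /=; ring.
by rewrite oppr_eq0.
Qed.

Lemma nondeg_swap23 a b c : nondeg (a, b, c) -> nondeg (a, c, b).
Proof.
rewrite /nondeg /tv1 /tv2 /tv3 /=.
have -> : cross (psub c a) (psub b a) = - cross (psub b a) (psub c a).
  by rewrite /cross /psub /=; ring.
by rewrite oppr_eq0.
Qed.

Lemma nondeg_dist_gt0 a b c : nondeg (a, b, c) ->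
  [/\ 0 < dist a b, 0 < dist b c & 0 < dist a c].
Proof.
have nondeg_neq (p q r : pt R) : nondeg (p, q, r) -> 0 < dist p q.
  rewrite lt_neqAle dist_ge0 andbT eq_sym => nd; apply/eqP => /dist_eq0 pq.
  by move: nd; rewrite /nondeg /tv1 /tv2 /tv3 /= pq /cross /psub /= !subrr !mul0r subrr eqxx.
move=> nd; split; first exact: nondeg_neq nd.
- by apply: (nondeg_neq _ _ a); apply/nondeg_swap23/nondeg_swap12.
- by apply: (nondeg_neq _ _ b); apply/nondeg_swap23.
Qed.

Lemma nondeg_uniq a b c : nondeg (a, b, c) -> uniq [:: a; b; c].
Proof.
case/nondeg_dist_gt0 => ab bc ac /=; rewrite !inE negb_or.
have neq p q : 0 < dist p q -> p != q by apply: contraTneq => ->; rewrite distxx ltxx.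
by rewrite !neq.
Qed.

Lemma cos_angle_sides_triangle a b c : nondeg (a, b, c) ->
  let ab := dist a b in let bc := dist b c in let ac := dist a c in
  [/\ cos_angle b a c = (ab ^+ 2 + ac ^+ 2 - bc ^+ 2) / (2 * (ab * ac)),
      cos_angle a b c = (ab ^+ 2 + bc ^+ 2 - ac ^+ 2) / (2 * (ab * bc)) &
      cos_angle a c b = (ac ^+ 2 + bc ^+ 2 - ab ^+ 2) / (2 * (ac * bc))].
Proof.
case/nondeg_dist_gt0 => ab bc ac.
have ba : 0 < dist b a by rewrite distC.
have ca : 0 < dist c a by rewrite distC.
have cb : 0 < dist c b by rewrite distC.
by rewrite !cos_angle_sides // (distC b a) (distC c a) (distC c b).
Qed.

Lemma triangle_cos_angles a b c : nondeg (a, b, c) ->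
  let x := cos_angle b a c in let y := cos_angle a b c in let z := cos_angle a c b in
  [/\ 0 <= x + y, 0 <= x + z, 0 <= y + z &
      x ^+ 2 + y ^+ 2 + z ^+ 2 + 2 * x * y * z = 1].
Proof.
move=> nd; have [ab bc ac] := nondeg_dist_gt0 nd.
have [-> -> ->] := cos_angle_sides_triangle nd.
have := dist_triangle b a c; have := dist_triangle a b c; have := dist_triangle a c b.
rewrite (distC b a) (distC c b) => t1 t2 t3.
by apply: triangle_cosines => //; lra.
Qed.

Lemma ler_acos (x y : R) : -1 <= x -> x <= y -> y <= 1 -> acos y <= acos x.
Proof.
move=> x1 xy y1.
have hx : -1 <= x <= 1 by rewrite x1 (le_trans xy y1).
have hy : -1 <= y <= 1 by rewrite y1 (le_trans x1 xy).
rewrite leNgt; apply/negP => lt_acos.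
have : cos (acos y) < cos (acos x).
  by rewrite ltr_cos // in_itv /= ?acos_ge0 ?acos_lepi.
by rewrite !acosK ?in_itv //= ltNge xy.
Qed.

Lemma Maxac_tri_of_cos a b c m : m <= 1 -> nondeg (a, b, c) ->
  [\/ -m <= cos_angle b a c <= m, -m <= cos_angle a b c <= m
    | -m <= cos_angle a c b <= m] ->
  Maxac_tri (acos (- m)) a b c.
Proof.
move=> m1 nd one_mid.
have [s1 s2 s3 _] := triangle_cos_angles nd.
have ge_m : [/\ -m <= cos_angle b a c, -m <= cos_angle a b c & -m <= cos_angle a c b].
  by case: one_mid => /andP[? ?]; split; lra.
have le1 x : -m <= x -> x <= 1 -> acos x <= acos (- m).
  by move=> mx x1; apply: ler_acos => //; lra.
by case: ge_m => *; split; apply: le1; rewrite // (andP (cos_angle_bound _ _ _)).2.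
Qed.

Definition cos_bounded (k : R) a b c : Prop :=
  [/\ nondeg (a, b, c), cos_angle b a c <= k, cos_angle a b c <= k & cos_angle a c b <= k].

Lemma cos_bounded_swap12 k a b c : cos_bounded k a b c -> cos_bounded k b a c.
Proof. by case=> nd *; split; [exact: nondeg_swap12 | .. | rewrite cos_angleC]. Qed.

Lemma cos_bounded_swap23 k a b c : cos_bounded k a b c -> cos_bounded k a c b.
Proof. by case=> nd *; split; [exact: nondeg_swap23 | rewrite cos_angleC | ..]. Qed.

Lemma cos_bounded_perm k a b c x y z : perm_eq [:: a; b; c] [:: x; y; z] ->
  cos_bounded k x y z -> cos_bounded k a b c.
Proof.
move=> pabc kxyz; have [nd _ _ _] := kxyz.
have := nondeg_uniq nd; rewrite -(perm_uniq pabc) => uabc.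
have mem v : v \in [:: a; b; c] -> v \in [:: x; y; z] by rewrite (perm_mem pabc).
have kyxz := cos_bounded_swap12 kxyz; have kxzy := cos_bounded_swap23 kxyz.
have kyzx := cos_bounded_swap23 kyxz; have kzxy := cos_bounded_swap12 kxzy.
have kzyx := cos_bounded_swap23 kzxy.
have /mem + := mem_head a [:: b; c]; have /mem + : b \in [:: a; b; c] by rewrite !inE eqxx orbT.
have /mem + : c \in [:: a; b; c] by rewrite !inE eqxx !orbT.
rewrite !inE => /or3P[] /eqP ea /or3P[] /eqP eb /or3P[] /eqP ec; subst a b c;
  by move: uabc; rewrite /= !inE ?eqxx ?orbT ?andbF.
Qed.

Lemma cos_bounded_between k a b c : cos_bounded k a b c ->
  [/\ -k <= cos_angle b a c <= k, -k <= cos_angle a b c <= k & -k <= cos_angle a c b <= k].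
Proof.
case=> nd hA hB hC; have [s1 s2 s3 _] := triangle_cos_angles nd.
by split; apply/andP; split => //; lra.
Qed.

Lemma cos_bounded_Maxac k m a b c : k <= m -> m <= 1 -> cos_bounded k a b c ->
  Maxac_tri (acos (- m)) a b c.
Proof.
move=> km m1 kabc; have [nd _ _ _] := kabc.
have [/andP[hA1 hA2] _ _] := cos_bounded_between kabc.
by apply: Maxac_tri_of_cos => //; apply: Or31; apply/andP; split; lra.
Qed.

Lemma cos_le_of_le_acos (alpha x : R) : 0 < alpha -> -1 <= x <= 1 -> alpha <= acos x ->
  x <= cos (Num.min alpha pi).
Proof.
move=> alpha0 x1 le_acos.
have m0 : 0 <= Num.min alpha pi by rewrite le_min (ltW alpha0) pi_ge0.
have mpi : Num.min alpha pi <= pi by rewrite ge_min lexx orbT.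
rewrite -{1}(acosK (x := x)) ?in_itv // leNgt ltr_cos ?in_itv /= ?acos_ge0 ?acos_lepi ?m0 //.
by rewrite -leNgt ge_min le_acos.
Qed.

Lemma cos_min_pi_lt1 (alpha : R) : 0 < alpha -> cos (Num.min alpha pi) < 1.
Proof.
move=> alpha0.
have m0 : 0 < Num.min alpha pi by rewrite lt_min alpha0 pi_gt0.
have mpi : Num.min alpha pi <= pi by rewrite ge_min lexx orbT.
by rewrite -cos0 ltr_cos ?in_itv /= ?mpi ?(ltW m0) ?lexx ?pi_ge0.
Qed.

Lemma Minac_cos_bounded alpha k a b c : 0 < alpha -> cos (Num.min alpha pi) <= k ->
  nondeg (a, b, c) -> Minac_tri alpha a b c -> cos_bounded k a b c.
Proof.
move=> alpha0 kmin nd [hA hB hC].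
by split; rewrite // (le_trans _ kmin) // cos_le_of_le_acos // cos_angle_bound.
Qed.

Lemma sqr_cross_le (u w : pt R) :
  cross u w ^+ 2 <= (u.1 ^+ 2 + u.2 ^+ 2) * (w.1 ^+ 2 + w.2 ^+ 2).
Proof. by have := sqr_ge0 (u.1 * w.1 + u.2 * w.2); rewrite /cross; nra. Qed.

Lemma cut_diagonal_le (k s t : R) a b c : 0 <= k < 1 -> 0 <= t <= 1 -> nondeg (a, b, c) ->
  -k <= cos_angle b a c <= k -> -k <= cos_angle a b c <= k ->
  dist b (lerp a c t) <= 3 / (1 - k ^+ 2) * dist (lerp a b s) c.
Proof.
move=> /andP[k0 k1] /andP[t0 t1] nd kA kB.
have [ab bc ac] := nondeg_dist_gt0 nd.
have ba : 0 < dist b a by rewrite distC.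
have ca : 0 < dist c a by rewrite distC.
have cb : 0 < dist c b by rewrite distC.
have sqr_le x : -k <= x <= k -> 1 - k ^+ 2 <= 1 - x ^+ 2 by case/andP; nra.
set D := cross (psub b a) (psub c a).
(* [|D|] is twice the area of [abc]: at most [ab] times the distance from [c] to the
   line [ab], and at least [sqrt (1 - k^2)] times the product of the two sides at [a],
   resp. at [b]. *)
have D_le : D ^+ 2 <= dist b a ^+ 2 * dist (lerp a b s) c ^+ 2.
  have -> : D = - cross (psub b a) (psub (lerp a b s) c) by rewrite /D /cross /psub /=; ring.
  by rewrite sqrrN !sqr_dist sqr_cross_le.
have D_ge_b : dist b a ^+ 2 * dist b c ^+ 2 * (1 - k ^+ 2) <= D ^+ 2.
  have -> : D ^+ 2 = cross (psub a b) (psub c b) ^+ 2 by rewrite /D /cross /psub /=; ring.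
  rewrite sqr_cross_cos_angle // exprMn (distC a b) (distC c b).
  by rewrite ler_wpM2l ?sqr_le // mulr_ge0 ?sqr_ge0.
have D_ge_a : dist b a ^+ 2 * dist c a ^+ 2 * (1 - k ^+ 2) <= D ^+ 2.
  rewrite /D sqr_cross_cos_angle // exprMn.
  by rewrite ler_wpM2l ?sqr_le // mulr_ge0 ?sqr_ge0.
have bQ_le : dist b (lerp a c t) ^+ 2 <= dist b a ^+ 2 + dist b c ^+ 2.
  have -> : dist b (lerp a c t) ^+ 2
      = (1 - t) * dist b a ^+ 2 + t * dist b c ^+ 2 - t * (1 - t) * dist c a ^+ 2.
    by rewrite !sqr_dist /lerp /=; ring.
  have t1' : 0 <= 1 - t by lra.
  have := mulr_ge0 t0 (sqr_ge0 (dist b a)); have := mulr_ge0 t1' (sqr_ge0 (dist b c)).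
  have := mulr_ge0 (mulr_ge0 t0 t1') (sqr_ge0 (dist c a)); lra.
have ba_le : dist b a <= dist b c + dist c a by exact: dist_triangle.
apply: (area_ratio_bound bc ca ba _ (dist_ge0 _ _) (dist_ge0 _ _) D_le) => //.
by apply/andP; split; nra.
Qed.

Section CutTriangle.
Variables (k s t : R) (a b c : pt R).
Hypotheses (k01 : 0 <= k < 1) (s01 : 0 < s < 1) (t01 : 0 < t < 1).
Hypothesis kabc : cos_bounded k a b c.

Let p := lerp a b s.
Let q := lerp a c t.
Let m := (3 + k) / 4.

Lemma cut_nondeg :
  [/\ nondeg (a, p, q), nondeg (p, b, c), nondeg (p, c, q), nondeg (b, c, q)
    & nondeg (b, q, p)].
Proof.
have [nd _ _ _] := kabc; move: nd; rewrite /nondeg /tv1 /tv2 /tv3 /= => nd.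
have /andP[s0 s1] := s01; have /andP[t0 t1] := t01.
have s1' : 1 - s != 0 by rewrite subr_eq0 gt_eqF.
have t1' : 1 - t != 0 by rewrite subr_eq0 gt_eqF.
set D := cross _ _ in nd.
split.
- have -> : cross (psub p a) (psub q a) = s * t * D by rewrite /D /cross /psub /=; ring.
  by rewrite !mulf_neq0 // gt_eqF.
- have -> : cross (psub b p) (psub c p) = (1 - s) * D by rewrite /D /cross /psub /=; ring.
  by rewrite mulf_neq0.
- have -> : cross (psub c p) (psub q p) = s * (1 - t) * D by rewrite /D /cross /psub /=; ring.
  by rewrite !mulf_neq0 // gt_eqF.
- have -> : cross (psub c b) (psub q b) = (1 - t) * D by rewrite /D /cross /psub /=; ring.
  by rewrite mulf_neq0.
- have -> : cross (psub q b) (psub p b) = t * (1 - s) * D by rewrite /D /cross /psub /=; ring.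
  by rewrite !mulf_neq0 // gt_eqF.
Qed.

Lemma cut_cos_angles :
  [/\ cos_angle p a q = cos_angle b a c, cos_angle p b c = cos_angle a b c,
      cos_angle b c q = cos_angle b c a, cos_angle p q c = - cos_angle p q a
    & cos_angle b p q = - cos_angle a p q].
Proof.
have /andP[s0 s1] := s01; have /andP[t0 t1] := t01.
split.
- by rewrite cos_angle_lerpl // cos_angleC cos_angle_lerpl // cos_angleC.
- exact: cos_angle_lerpr.
- by rewrite cos_angleC cos_angle_lerpr // cos_angleC.
- by rewrite cos_angleC cos_angle_lerp_supp // cos_angleC.
- exact: cos_angle_lerp_supp.
Qed.

Lemma cut_triangle_Maxac : Maxac_tri (acos (- m)) a p q.
Proof.
have [nd _ _ _ _] := cut_nondeg; have [e1 _ _ _ _] := cut_cos_angles.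
have [/andP[kA1 kA2] _ _] := cos_bounded_between kabc.
have /andP[k0 k1] := k01.
apply: Maxac_tri_of_cos nd _; rewrite /m; first lra.
by apply: Or31; rewrite e1; apply/andP; split; lra.
Qed.

Lemma cut_quad_convex : convex_quad p b c q.
Proof.
have [nd _ _ _] := kabc; move: nd; rewrite /nondeg /tv1 /tv2 /tv3 /= => nd.
have /andP[s0 s1] := s01; have /andP[t0 t1] := t01.
set D := cross _ _ in nd.
rewrite /convex_quad.
have -> : cross (psub b p) (psub c b) = (1 - s) * D by rewrite /D /cross /psub /=; ring.
have -> : cross (psub c b) (psub q c) = (1 - t) * D by rewrite /D /cross /psub /=; ring.
have -> : cross (psub q c) (psub p q) = (1 - t) * s * D by rewrite /D /cross /psub /=; ring.
have -> : cross (psub p q) (psub b p) = t * (1 - s) * D by rewrite /D /cross /psub /=; ring.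
have s1' : 0 < 1 - s by rewrite subr_gt0.
have t1' : 0 < 1 - t by rewrite subr_gt0.
case: (ltgtP D 0) => hD; last by rewrite hD eqxx in nd.
- by right; split; rewrite pmulr_rlt0 ?mulr_gt0.
- by left; split; rewrite pmulr_rgt0 ?mulr_gt0.
Qed.

Lemma cut_quad_RDP : RDP (3 / (1 - k ^+ 2)) (acos (- m)) p b c q.
Proof.
split; first exact: cut_quad_convex.
have /andP[k0 k1] := k01; have /andP[s0 s1] := s01; have /andP[t0 t1] := t01.
have m_def : m = (3 + k) / 4 by [].
have m1 : m <= 1 by lra.
have [nd _ _ _] := kabc.
have [nd_apq nd_pbc nd_pcq nd_bcq nd_bqp] := cut_nondeg.
have [e_a e_b e_c e_q e_p] := cut_cos_angles.
have [kA kB kC] := cos_bounded_between kabc.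
have [kA' kC' _] := cos_bounded_between (cos_bounded_swap23 kabc).
have [sum_ap sum_aq _ id_apq] := triangle_cos_angles nd_apq.
case: (@cos_identity_split _ k (cos_angle a p q) (cos_angle a q p) (cos_angle p a q)).
- by rewrite k0.
- by rewrite -[RHS]id_apq; ring.
- exact: cos_angle_bound.
- exact: cos_angle_bound.
- by rewrite e_a; case/andP: kA.
- move=> y_le; right; split.
    have [bq _ _] := nondeg_dist_gt0 nd_bqp.
    rewrite ler_pdivrMr // distC [dist b q]distC.
    by apply: (cut_diagonal_le t k01 _ (nondeg_swap23 nd) kA' kC'); rewrite !ltW.
  split; apply: Maxac_tri_of_cos => //.
  + apply: Or32; rewrite e_c cos_angleC.
    by case/andP: kC => ? ?; apply/andP; split; lra.
  + apply: Or33; rewrite e_p; rewrite e_a in sum_ap.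
    by case/andP: kA => ? ?; apply/andP; split; lra.
- move=> z_le; left; split.
    have [pc _ _] := nondeg_dist_gt0 nd_pcq.
    rewrite ler_pdivrMr //.
    by apply: (cut_diagonal_le s k01 _ nd kA kB); rewrite !ltW.
  split; apply: Maxac_tri_of_cos => //.
  + apply: Or32; rewrite e_b.
    by case/andP: kB => ? ?; apply/andP; split; lra.
  + apply: Or33; rewrite e_q cos_angleC; rewrite e_a in sum_aq.
    by case/andP: kA => ? ?; apply/andP; split; lra.
Qed.

End CutTriangle.

End Triangles.

Theorem lemma4p4 (R : realType) (alpha : R) : 0 < alpha ->
  exists (N : R) (psi : R), 0 < psi < pi /\
  forall (Omega : set (pt R)) (gx gy : R -> R) (Uh : seq (tri R)) (Fh : set (elem R)),
    convex_polygon Omega ->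
    C2 gx -> C2 gy -> regular_curve gx gy -> Gamma gx gy `<=` Omega ->
    triangulation Omega Uh -> quasi_uniform Uh -> Minac_mesh alpha Uh ->
    interface_fitted gx gy Uh Fh ->
    forall e, Fh e -> elem_ok N psi e.
Proof.
move=> alpha0.
set k := Num.max (cos (Num.min alpha pi)) 0.
have k01 : 0 <= k < 1 by rewrite le_max lexx orbT /= gt_max cos_min_pi_lt1 // ltr01.
have /andP[k0 k1] := k01.
exists (3 / (1 - k ^+ 2)), (acos (- ((3 + k) / 4))); split.
  by apply/andP; split; [apply: acos_gt0 | apply: acos_ltpi]; apply/andP; split; lra.
move=> Omega gx gy Uh Fh _ _ _ _ _ [ndU _ _] _ minU [_ ->] e.
have kU T : T \in Uh -> cos_bounded k (tv1 T) (tv2 T) (tv3 T).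
  by move=> TU; apply: Minac_cos_bounded alpha0 _ (ndU T TU) (minU T TU); rewrite le_max lexx.
case=> [[T [TU _ ->]] | [T [a [b [c [p [q [TU _ cut pq]]]]]]]].
  by apply: cos_bounded_Maxac (kU T TU); lra.
case: cut => perm [s [s01 ->]] [t [t01 ->]] _ in pq *.
have kabc := cos_bounded_perm perm (kU T TU).
by case: pq => ->; [apply: cut_triangle_Maxac | apply: cut_quad_RDP].
Qed.
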